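(* Let $\{G_j\}_{j\in J}$ be a family of metrizable topological groups. Let $\mathbb I=[J]^{\leq\omega}$ be the set of countable subsets of $J$ ordered by inclusion, and for $D\in\mathbb I$ let $G_D=\prod_{j\in D}G_j\times\prod_{j\notin D}\{e_j\}\subseteq\prod_{j\in J}G_j$ with the product topology. Then $\{G_D\}_{D\in\mathbb I}$ (with inclusions as bonding maps) satisfies ACP, and $\operatorname{colim}_{D\in\mathbb I}G_D=\sum_{j\in J}(G_j,e_j)$.
   Context: For pointed spaces $(Y_j,0_j)$, the $\Sigma$-product $\sum_{j\in J}(Y_j,0_j)$ is the set of $y\in\prod_jY_j$ whose support $\{j\mid y_j\neq0_j\}$ is countable, with the topology induced by the product topology. $\operatorname{colim}$ denotes the union $\bigcup_DG_D$ with the colimit space topology $\{U\mid U\cap G_D\text{ open in }G_D\ \forall D\}$. ACP means that this colimit space topology coincides with the finest group topology on the union making all inclusions continuous (equivalently, the union with the colimit space topology is a topological group). *)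

From HB Require Import structures.
From mathcomp Require Import all_boot all_order all_algebra.
From mathcomp Require Import all_classical all_reals all_analysis.
From Stdlib Require Import Rdefinitions.

Set Implicit Arguments.
Unset Strict Implicit.
Unset Printing Implicit Defensive.

Local Open Scope classical_set_scope.

Definition is_topological_group (T : topologicalType)
  (mul : T -> T -> T) (inv : T -> T) (e : T) : Prop :=
  [/\ (forall x y z, mul x (mul y z) = mul (mul x y) z),
      (forall x, mul e x = x /\ mul x e = x),
      (forall x, mul (inv x) x = e /\ mul x (inv x) = e),
      continuous (fun p : T * T => mul p.1 p.2) &
      continuous inv].

Definition metrizable (T : topologicalType) : Prop :=
  exists d : T -> T -> R,
    [/\ (forall x y, (0 <= d x y)%R),
        (forall x y, d x y = 0%R <-> x = y),
        (forall x y, d x y = d y x),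
        (forall x y z, (d x z <= d x y + d y z)%R) &
        (forall A : set T, open A <->
           (forall x, A x -> exists r : R, (0 < r)%R /\
               [set y | (d x y < r)%R] `<=` A))].

Section SigmaProduct.
Variables (J : Type) (G : J -> topologicalType).

Definition Prod := prod_topology G.

Definition rel_open (S A : set Prod) : Prop :=
  exists V : set Prod, open V /\ A = V `&` S.

Definition support (e : forall j, G j) (y : Prod) : set J :=
  [set j | y j <> e j].

Definition sigma_prod (e : forall j, G j) : set Prod :=
  [set y | countable (support e y)].

Definition GD (e : forall j, G j) (D : set J) : set Prod :=
  [set y | forall j, ~ D j -> y j = e j].

Definition colim_carrier (e : forall j, G j) : set Prod :=
  [set y | exists D : set J, countable D /\ GD e D y].

Definition colim_open (e : forall j, G j) (U : set Prod) : Prop :=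
  U `<=` colim_carrier e /\
  forall D : set J, countable D -> rel_open (GD e D) (U `&` GD e D).

Definition pmul (mul : forall j, G j -> G j -> G j) (x y : Prod) : Prod :=
  fun j => mul j (x j) (y j).
Definition pinv (inv : forall j, G j -> G j) (x : Prod) : Prod :=
  fun j => inv j (x j).

(** ACP: the union with the colimit space topology is a topological group
    (the union is a subgroup, multiplication is continuous from
    colim x colim (product topology, written out via basic open boxes) to colim,
    and inversion is continuous). *)
Definition ACP (mul : forall j, G j -> G j -> G j) (inv : forall j, G j -> G j)
  (e : forall j, G j) : Prop :=
  let C := colim_carrier e in
  [/\ C (fun j => e j),
      (forall x y, C x -> C y -> C (pmul mul x y)),
      (forall x, C x -> C (pinv inv x)),
      (forall W x y, colim_open e W -> C x -> C y -> W (pmul mul x y) ->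
         exists U V, [/\ colim_open e U, colim_open e V, U x, V y &
           forall u v, U u -> V v -> W (pmul mul u v)]) &
      (forall W x, colim_open e W -> C x -> W (pinv inv x) ->
         exists U, [/\ colim_open e U, U x &
           forall u, U u -> W (pinv inv u)])].

End SigmaProduct.

From Pilot Require Import Defs.
From HB Require Import structures.
From mathcomp Require Import all_boot all_order all_algebra.
From mathcomp Require Import all_classical all_reals all_analysis.
From Stdlib Require Import Reals Lra.
From Stdlib Require List.
From mathcomp Require Import zify.

Set Implicit Arguments.
Unset Strict Implicit.
Unset Printing Implicit Defensive.

Local Open Scope classical_set_scope.

(* The colimit topology on the union of the G_D is the trace of the product
   topology on the Sigma-product.  If U is colim-open and x in U lies in the
   product closure of Sigma \ U, a diagonal recursion picks y_k in Sigma \ U in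
   the box of radius 1/(k+1) around x on the first k coordinates of the
   supports of x, y_0, ..., y_(k-1); then y_k --> x inside a single G_D with D
   countable, contradicting the openness of U `&` G_D in G_D.  The
   Sigma-product is a subgroup of the topological group prod_j G_j, so with
   the subspace topology it is a topological group, which is ACP. *)

Lemma countableU (T : Type) (A B : set T) :
  countable A -> countable B -> countable (A `|` B).
Proof.
move=> cA cB.
have : countable (\bigcup_(b in [set: bool]) (if b then A else B)).
  by apply: bigcup_countable => // -[].
apply: sub_countable; apply: subset_card_le => x [Ax|Bx].
  by exists true.
by exists false.
Qed.

Section ProductTopology.
Variables (J : Type) (G : J -> topologicalType).

Lemma cvg_prod_coordwise (X : Type) (F : set_system X) {FF : Filter F}
    (f : X -> Prod G) (x : Prod G) :
  (forall j, (fun t => f t j) @ F --> x j) -> f @ F --> x.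
Proof.
(* [prod_topology] is the supremum of the initial topologies of the projections. *)
move=> fx.
have := @cvg_sup _ J (fun i => Topological.class
    (initial_topology (fun f : (forall i, G i) => f i))) (f @ F) x _.
move=> [_ ]; apply => j A /=.
rewrite (@nbhsE (initial_topology (fun f : (forall i, G i) => f j))).
move=> -[B [[C oC <-] Bx] BA].
apply: filterS BA _; apply: (fx j C); exact: open_nbhs_nbhs.
Qed.

Lemma prod_proj_continuous (j : J) : continuous (fun f : Prod G => f j).
Proof.
move=> f.
have := @cvg_sup _ J (fun i => Topological.class
    (initial_topology (fun f : (forall i, G i) => f i))) (nbhs (f : Prod G)) f _.
move=> [+ _] => /(_ cvg_id j) fj.
apply: cvg_trans _ (@initial_continuous _ _ (fun f : (forall i, G i) => f j) f).
by move=> A hA; apply: fj.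
Qed.

Lemma pmul_continuous (mul : forall j, G j -> G j -> G j) :
  (forall j, continuous (fun p : G j * G j => mul j p.1 p.2)) ->
  continuous (fun p : Prod G * Prod G => Defs.pmul mul p.1 p.2).
Proof.
move=> mulc [x y].
apply: (@cvg_prod_coordwise _ _ _ (fun p : Prod G * Prod G => Defs.pmul mul p.1 p.2)) => j.
have coord2 : (fun p : Prod G * Prod G => (p.1 j, p.2 j)) @ (x, y) --> (x j, y j).
  apply: cvg_pair.
  - exact: (@continuous_comp _ _ _ fst (fun f : Prod G => f j) (x, y)
      cvg_fst (@prod_proj_continuous j _)).
  - exact: (@continuous_comp _ _ _ snd (fun f : Prod G => f j) (x, y)
      cvg_snd (@prod_proj_continuous j _)).
exact: (continuous_comp coord2 (mulc j _)).
Qed.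

Lemma pinv_continuous (inv : forall j, G j -> G j) :
  (forall j, continuous (inv j)) -> continuous (Defs.pinv inv).
Proof.
move=> invc x.
apply: (@cvg_prod_coordwise _ (nbhs (x : Prod G)) _ (Defs.pinv inv)) => j.
exact: (continuous_comp (@prod_proj_continuous j x) (invc j _)).
Qed.

Lemma rel_open_continuous2 (S : set (Prod G)) (f : Prod G -> Prod G -> Prod G)
    (W : set (Prod G)) (x y : Prod G) :
  (forall u v, S u -> S v -> S (f u v)) ->
  {for (x, y), continuous (fun p : Prod G * Prod G => f p.1 p.2)} ->
  S x -> S y -> rel_open S W -> W (f x y) ->
  exists U V, [/\ rel_open S U, rel_open S V, U x, V y &
    forall u v, U u -> V v -> W (f u v)].
Proof.
move=> Sf fc Sx Sy [Q [oQ ->]] [Qfxy _].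
have [[A B] /= [+ +] AB] := fc _ (open_nbhs_nbhs (conj oQ Qfxy)).
rewrite !nbhsE => -[A' [oA' A'x] A'A] [B' [oB' B'y] B'B].
exists (A' `&` S), (B' `&` S); split; [by exists A' | by exists B' | by [] | by [] |].
by move=> u v [/A'A Au Su] [/B'B Bv Sv]; split; [exact: (AB (u, v)) | exact: Sf].
Qed.

Lemma rel_open_continuous1 (S : set (Prod G)) (f : Prod G -> Prod G)
    (W : set (Prod G)) (x : Prod G) :
  (forall u, S u -> S (f u)) -> {for x, continuous f} ->
  S x -> rel_open S W -> W (f x) ->
  exists U, [/\ rel_open S U, U x & forall u, U u -> W (f u)].
Proof.
move=> Sf fc Sx [Q [oQ ->]] [Qfx _].
move: (fc _ (open_nbhs_nbhs (conj oQ Qfx))); rewrite nbhsE => -[A [oA Ax] AQ].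
exists (A `&` S); split; [by exists A | by [] |].
by move=> u [/AQ Qu Su]; split; [exact: Qu | exact: Sf].
Qed.

End ProductTopology.

Lemma is_topological_group_mul1 (T : topologicalType) mul inv (e : T) :
  is_topological_group mul inv e -> mul e e = e.
Proof. by case=> _ mul1x _ _ _; case: (mul1x e). Qed.

Lemma is_topological_group_inv1 (T : topologicalType) mul inv (e : T) :
  is_topological_group mul inv e -> inv e = e.
Proof.
case=> _ mul1x mulVx _ _.
by rewrite -[LHS](proj2 (mul1x (inv e))); case: (mulVx e).
Qed.

Section SigmaProduct.
Variables (J : Type) (G : J -> topologicalType) (e : forall j, G j).

Lemma colim_carrierE : colim_carrier e = sigma_prod e.
Proof.
apply/seteqP; split => y.
  move=> [D [cD yD]]; apply: (sub_countable _ cD); apply: subset_card_le => j /= yj.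
  by apply: contrapT => Dj; apply: yj; apply: yD.
by move=> sy; exists (Defs.support e y); split => // j yj; apply: contrapT.
Qed.

Lemma GD_sigma_prod (D : set J) : countable D -> GD e D `<=` sigma_prod e.
Proof. by move=> cD y yD; rewrite -colim_carrierE; exists D. Qed.

Lemma GD_support (x : Prod G) (D : set J) :
  Defs.support e x `<=` D -> GD e D x.
Proof. by move=> xD j Dj; apply: contrapT => /xD. Qed.

Lemma sigma_prod_unit : sigma_prod e (fun j => e j).
Proof. by rewrite -colim_carrierE; exists set0; split; [exact: countable0|]. Qed.

Lemma sigma_prod_pmul (mul : forall j, G j -> G j -> G j) (x y : Prod G) :
  (forall j, mul j (e j) (e j) = e j) ->
  sigma_prod e x -> sigma_prod e y -> sigma_prod e (Defs.pmul mul x y).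
Proof.
move=> mul1 sx sy; apply: (sub_countable _ (countableU sx sy)).
apply: subset_card_le => j /= xyj.
apply: contrapT => /not_orP[/contrapT xj /contrapT yj].
by apply: xyj; rewrite /Defs.pmul xj yj mul1.
Qed.

Lemma sigma_prod_pinv (inv : forall j, G j -> G j) (x : Prod G) :
  (forall j, inv j (e j) = e j) ->
  sigma_prod e x -> sigma_prod e (Defs.pinv inv x).
Proof.
move=> inv1 sx; apply: (sub_countable _ sx); apply: subset_card_le => j /= xj.
by apply: contra_not xj; rewrite /Defs.pinv => ->.
Qed.

Lemma rel_open_colim_open (U : set (Prod G)) :
  rel_open (sigma_prod e) U -> colim_open e U.
Proof.
move=> [V [oV ->]]; split; first by rewrite colim_carrierE => ? [].
move=> D cD; exists V; split => //; apply/seteqP; split => z; first by case; case.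
by move=> [Vz Dz]; split => //; split => //; apply: GD_sigma_prod Dz.
Qed.

End SigmaProduct.

(* [history k] is [x; diag_seq 0; ...; diag_seq k.-1]. *)
Section Diagonal.
Variables (J P : Type) (E : P -> nat -> option J) (x : P) (Y : list J -> nat -> P).

Definition coords (h : list P) (k : nat) : list J :=
  List.flat_map (fun z => List.flat_map
    (fun m => if E z m is Some j then [:: j] else [::]) (List.seq 0 k)) h.

Fixpoint history (k : nat) : list P :=
  if k is k'.+1 then history k' ++ [:: Y (coords (history k') k') k'] else [:: x].

Definition diag_seq (k : nat) : P := Y (coords (history k) k) k.

Lemma history_mono (i k : nat) (z : P) :
  (i <= k)%N -> List.In z (history i) -> List.In z (history k).
Proof.
elim: k => [|k IH]; first by rewrite leqn0 => /eqP->.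
rewrite leq_eqVlt => /orP[/eqP-> //|]; rewrite ltnS => /IH iz /iz zk /=.
by apply: List.in_or_app; left.
Qed.

Lemma history_start (k : nat) : List.In x (history k).
Proof. by apply: (history_mono (leq0n k)); left. Qed.

Lemma history_diag (k : nat) : List.In (diag_seq k) (history k.+1).
Proof. by apply: List.in_or_app; right; left. Qed.

Lemma in_coords (h : list P) (k : nat) (z : P) (m : nat) (j : J) :
  List.In z h -> (m < k)%N -> E z m = Some j -> List.In j (coords h k).
Proof.
move=> zh mk Ezm; apply/List.in_flat_map; exists z; split => //.
apply/List.in_flat_map; exists m; split; last by rewrite Ezm; left.
by apply/List.in_seq; lia.
Qed.

Lemma coords_history (i k : nat) (z : P) (m : nat) (j : J) :
  List.In z (history i) -> E z m = Some j -> (i <= k)%N -> (m < k)%N ->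
  List.In j (coords (history k) k).
Proof.
by move=> zi Ezm ik mk; apply: (in_coords (history_mono ik zi) mk Ezm).
Qed.

End Diagonal.

Lemma countable_enumeration (J : Type) : exists E : set J -> nat -> option J,
  forall A, countable A -> forall j, A j -> exists m, E A m = Some j.
Proof.
have /choice [E HE] : forall A : set J, exists f : nat -> option J,
    countable A -> forall j, A j -> exists m, f m = Some j.
  move=> A; have [cA|ncA] := pselect (countable A); last first.
    by exists (fun _ => None) => /ncA.
  have /countable_injP [g ginj] := cA.
  exists (fun m => if pselect (exists j, A j /\ g j = m) is left P
            then Some (projT1 (cid P)) else None).
  move=> _ j Aj; exists (g j).
  case: pselect => [P|]; last by case; exists j.
  case: (cid P) => j' [Aj' gj'] /=; congr Some.
  by apply: ginj => //; rewrite inE.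
by exists E.
Qed.

Section MetricProduct.
Variables (J : Type) (G : J -> topologicalType) (d : forall j, G j -> G j -> R).
Hypothesis d_refl : forall j (x : G j), d x x = 0%R.
Hypothesis d_triangle : forall j (x y z : G j), (d x z <= d x y + d y z)%R.
Hypothesis d_open : forall j (A : set (G j)), open A <->
  (forall x, A x -> exists r : R, (0 < r)%R /\ [set y | (d x y < r)%R] `<=` A).

Lemma dball_open (j : J) (a : G j) (r : R) : open [set y | (d a y < r)%R].
Proof.
apply/d_open => y /= ay; exists (r - d a y)%R; split; first lra.
by move=> z /= yz; have := d_triangle a y z; lra.
Qed.

Lemma nbhs_dball (j : J) (a : G j) (N : set (G j)) :
  nbhs a N -> exists r : R, (0 < r)%R /\ [set y | (d a y < r)%R] `<=` N.
Proof.
rewrite nbhsE => -[B [oB Ba] BN].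
have [r [r0 aB]] := (d_open B).1 oB a Ba.
by exists r; split => //; apply: subset_trans BN.
Qed.

Definition box (x : Prod G) (F : list J) (n : nat) : set (Prod G) :=
  [set z | forall j, List.In j F -> (d (x j) (z j) < / INR n.+1)%R].

Lemma box_center (x : Prod G) (F : list J) (n : nat) : box x F n x.
Proof. by move=> j _; rewrite d_refl; apply/Rinv_0_lt_compat/lt_0_INR; lia. Qed.

Lemma box_open (x : Prod G) (F : list J) (n : nat) : open (box x F n).
Proof.
elim: F => [|a F IH].
  have -> : box x [::] n = setT by apply/seteqP; split=> // z _ j [].
  exact: openT.
have -> : box x (a :: F) n =
    (fun z : Prod G => z a) @^-1` [set y | (d (x a) y < / INR n.+1)%R] `&` box x F n.
  apply/seteqP; split => z /=.
    by move=> xz; split; [apply: xz; left | move=> j jF; apply: xz; right].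
  by move=> [xza xzF] j [<-|jF] //; apply: xzF.
apply: openI => //; move: (@prod_proj_continuous _ G a) => /continuousP; apply.
exact: dball_open.
Qed.

Lemma box_cvg (x : Prod G) (F : nat -> list J) (y : nat -> Prod G) :
  (forall k, box x (F k) k (y k)) ->
  (forall j, (exists K, forall k, (K <= k)%N -> List.In j (F k)) \/
             (forall k, y k j = x j)) ->
  y @ \oo --> x.
Proof.
move=> yF jF; apply: cvg_prod_coordwise => j.
case: (jF j) => [[K jFk]|yx]; last first.
  by rewrite (_ : (fun k => y k j) = fun=> x j); [exact: cvg_cst | apply: funext].
move=> A /= /nbhs_dball [r [r0 rA]].
have [N [N_gt_r N0]] := archimed_cor1 r r0.
exists (N + K)%N => // k /= Nk; apply: rA => /=.
have : (/ INR k.+1 <= / INR N)%R.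
  by apply: Rinv_le_contravar; [exact: lt_0_INR | apply/le_INR/leP; lia].
have Fk : List.In j (F k) by apply: jFk; lia.
have := yF k j Fk; lra.
Qed.

Variable e : forall j, G j.

Lemma sigma_prod_closure_seq (S : set (Prod G)) (x : Prod G) :
  S `<=` sigma_prod e -> sigma_prod e x -> closure S x ->
  exists (y : nat -> Prod G) (D : set J),
    [/\ countable D, GD e D x, forall k, S (y k) /\ GD e D (y k) & y @ \oo --> x].
Proof.
move=> Ssigma sx Sx.
have /choice [Y0 YS] : forall p : list J * nat, exists y, S y /\ box x p.1 p.2 y.
  move=> [F n]; have Fx : open_nbhs x (box x F n).
    by split; [exact: box_open | exact: box_center].
  by have [y [Sy Fy]] := Sx _ (open_nbhs_nbhs Fx); exists y.
pose Y F n := Y0 (F, n).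
have [E EP] := countable_enumeration J.
pose Ez z := E (Defs.support e z).
pose y := diag_seq Ez x Y.
pose D := Defs.support e x `|` \bigcup_(k in [set: nat]) Defs.support e (y k).
pose F k := coords Ez (history Ez x Y k) k.
have yFS k : S (y k) /\ box x (F k) k (y k) := YS (F k, k).
have yS k : S (y k) := (yFS k).1.
exists y, D; split.
- apply: countableU sx _; apply: bigcup_countable => // k _; exact: Ssigma.
- by apply: GD_support => j; left.
- by move=> k; split => //; apply: GD_support => j jk; right; exists k.
apply: (box_cvg (fun k => (yFS k).2)) => j.
have [[xj|[i _ yij]]|Dj] := pselect (D j); [left..|right => k].
- have [m Em] := EP _ sx _ xj.
  by exists m.+1 => k mk; apply: (coords_history (history_start _ _ _ 0) Em).
- have [m Em] := EP _ (Ssigma _ (yS i)) _ yij.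
  exists (i + m).+1 => k ik.
  by apply: (coords_history (history_diag _ _ _ i) Em); lia.
- have nxj : ~ Defs.support e x j by move=> xj; apply: Dj; left.
  have nyj : ~ Defs.support e (y k) j by move=> yj; apply: Dj; right; exists k.
  by rewrite (contrapT nxj) (contrapT nyj).
Qed.

Lemma colim_open_closure (U : set (Prod G)) (x : Prod G) :
  colim_open e U -> U x -> ~ closure (sigma_prod e `\` U) x.
Proof.
move=> [Ucolim UGD] Ux Sx.
have sx : sigma_prod e x by rewrite -colim_carrierE; apply: Ucolim.
have [y [D [cD Dx Dy yx]]] := sigma_prod_closure_seq (@subDsetl _ _ _) sx Sx.
have [V [oV UV]] := UGD D cD.
have [Vx _] : (V `&` GD e D) x by rewrite -UV.
have [k _ /(_ k (leqnn k)) Vy] := yx V (open_nbhs_nbhs (conj oV Vx)).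
have [[_ nUy] GDy] := Dy k.
by have [] : (U `&` GD e D) (y k) by rewrite UV.
Qed.

Lemma colim_openE (U : set (Prod G)) :
  colim_open e U <-> rel_open (sigma_prod e) U.
Proof.
split; last exact: rel_open_colim_open.
move=> Ucolim; exists (~` closure (sigma_prod e `\` U)); split.
  exact/closed_openC/closed_closure.
apply/seteqP; split => x.
  move=> Ux; split; first exact: colim_open_closure Ux.
  by rewrite -colim_carrierE; apply: Ucolim.1.
by move=> [nSx sx]; apply: contrapT => nUx; apply/nSx/subset_closure.
Qed.

End MetricProduct.

Lemma ACP_sigma_prod (J : Type) (G : J -> topologicalType)
    (mul : forall j, G j -> G j -> G j) (inv : forall j, G j -> G j)
    (e : forall j, G j) :
  (forall j, is_topological_group (mul j) (inv j) (e j)) ->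
  (forall U, colim_open e U <-> rel_open (sigma_prod e) U) ->
  ACP mul inv e.
Proof.
move=> tg colimE.
have mul1 j := is_topological_group_mul1 (tg j).
have inv1 j := is_topological_group_inv1 (tg j).
have mulc j : continuous (fun p : G j * G j => mul j p.1 p.2) by case: (tg j).
have invc j : continuous (inv j) by case: (tg j).
rewrite /ACP.
have -> : colim_open e = rel_open (sigma_prod e).
  by apply/funext => U; apply/propext.
rewrite colim_carrierE; split.
- exact: sigma_prod_unit.
- by move=> x y; apply: sigma_prod_pmul.
- by move=> x; apply: sigma_prod_pinv.
- move=> W x y oW sx sy Wxy; apply: rel_open_continuous2 oW Wxy => //.
    by move=> u v; apply: sigma_prod_pmul.
  exact: pmul_continuous.
- move=> W x oW sx Wx; apply: rel_open_continuous1 oW Wx => //.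
    by move=> u; apply: sigma_prod_pinv.
  exact: pinv_continuous.
Qed.

Theorem corollary2p5 (J : Type) (G : J -> topologicalType)
  (mul : forall j, G j -> G j -> G j) (inv : forall j, G j -> G j)
  (e : forall j, G j)
  (Htg : forall j, is_topological_group (mul j) (inv j) (e j))
  (Hmet : forall j, metrizable (G j)) :
  ACP mul inv e /\
  colim_carrier e = sigma_prod e /\
  (forall U : set (Prod G), colim_open e U <-> rel_open (sigma_prod e) U).
Proof.
pose d j := projT1 (cid (Hmet j)).
have dP j : [/\ _, _, _, _ & _] := projT2 (cid (Hmet j)).
have d_refl j (x : G j) : d j x x = 0%R by case: (dP j) => _ d0 _ _ _; apply/d0.
have d_triangle j : forall x y z : G j, (d j x z <= d j x y + d j y z)%R.
  by case: (dP j).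
have d_open j : forall A : set (G j), open A <-> (forall x, A x ->
    exists r : R, (0 < r)%R /\ [set y | (d j x y < r)%R] `<=` A).
  by case: (dP j).
have colimE := colim_openE d_refl d_triangle d_open e.
split; [exact: ACP_sigma_prod | split; [exact: colim_carrierE | exact: colimE]].
Qed.
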